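(* Let $G$ be a group and let $S \subset F$ be a set of weak identities in $G$. Then the $T$-subgroup $\langle S\rangle_T$ generated by $S$ is also a set of weak identities in $G$.
   Context: Let $F$ be the free group on countably many generators $g_1,g_2,\dots$. For $N\ge 1$, $F^{\times N}$ denotes the direct product of $N$ copies of $F$ and $i_k: F\to F^{\times N}$ the inclusion as the $k$-th factor. A subset $S\subset F$ is a set of weak identities in a group $G$ if there exists an integer $N\ge1$ such that for any elements $s_1,\dots,s_N\in S$ and any homomorphism $\rho: F^{\times N}\to G$ there is an index $k\in\{1,\dots,N\}$ with $\rho(i_k(s_k))=1$. A $T$-subgroup (verbal subgroup) of $F$ is a subgroup preserved by all endomorphisms of $F$; for $S\subset F$, $\langle S\rangle_T$ denotes the smallest $T$-subgroup of $F$ containing $S$. *)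

(* The free group F on countably many generators g_0, g_1, ...
   (the paper's g_1, g_2, ...) is built concretely as the set of freely reduced
   words; an arbitrary group G is a MathComp [groupType] (boot/monoid.v). *)
From mathcomp Require Import all_boot.
From mathcomp Require Import monoid.

Set Implicit Arguments.
Unset Strict Implicit.
Unset Printing Implicit Defensive.

(* A letter (i, b) stands for g_i if b = false and for g_i^-1 if b = true. *)
Definition letter := (nat * bool)%type.

Definition cancels (a b : letter) : bool := (a.1 == b.1) && (a.2 != b.2).

Definition reduced (w : seq letter) : bool :=
  sorted (fun a b => ~~ cancels a b) w.

Definition push (x : letter) (w : seq letter) : seq letter :=
  if w is y :: w' then (if cancels x y then w' else x :: w) else [:: x].

Lemma push_reduced x w : reduced w -> reduced (push x w).
Proof.
case: w => [|y w] //= H.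
case: ifP => C; first exact: path_sorted H.
by rewrite /reduced /= C.
Qed.

Definition reduce (w : seq letter) : seq letter := foldr push [::] w.

Lemma reduce_reduced w : reduced (reduce w).
Proof. by elim: w => [|x w IH] //=; apply: push_reduced. Qed.

Definition F := {w : seq letter | reduced w}.

Definition F1 : F := exist _ [::] (erefl true).

Definition Fmul (u v : F) : F :=
  exist _ (reduce (sval u ++ sval v)) (reduce_reduced _).

Definition Finv (u : F) : F :=
  exist _ (reduce (rev (map (fun a : letter => (a.1, ~~ a.2)) (sval u))))
          (reduce_reduced _).

Definition gen (i : nat) : F := exist _ [:: (i, false)] (erefl true).

Definition F_endo (f : F -> F) : Prop :=
  forall x y, f (Fmul x y) = Fmul (f x) (f y).

Definition Fprod (N : nat) := {ffun 'I_N -> F}.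

Definition Fprod_mul N (x y : Fprod N) : Fprod N := [ffun j => Fmul (x j) (y j)].

Definition incl N (k : 'I_N) (s : F) : Fprod N :=
  [ffun j => if j == k then s else F1].

Definition prod_hom (G : groupType) N (rho : Fprod N -> G) : Prop :=
  forall x y, rho (Fprod_mul x y) = (rho x * rho y)%g.

Definition weak_identities (G : groupType) (S : F -> Prop) : Prop :=
  exists N : nat, 1 <= N /\
    forall s : 'I_N -> F, (forall k, S (s k)) ->
    forall rho : Fprod N -> G, prod_hom rho ->
    exists k : 'I_N, rho (incl k (s k)) = 1%g.

Definition is_Tsubgroup (H : F -> Prop) : Prop :=
  [/\ H F1,
      (forall x y, H x -> H y -> H (Fmul x y)),
      (forall x, H x -> H (Finv x)) &
      (forall f, F_endo f -> forall x, H x -> H (f x))].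

Definition Tgen (S : F -> Prop) : F -> Prop :=
  fun x => forall H, is_Tsubgroup H -> (forall s, S s -> H s) -> H x.

(* Fix a homomorphism rho : F^N -> G and an index k.  The elements y with
   rho (i_k (f y)) = 1 for every endomorphism f of F form a T-subgroup, so if
   rho (i_k x_k) <> 1 for some x_k in <S>_T, this T-subgroup misses some
   s_k in S: there is an endomorphism f_k with rho (i_k (f_k s_k)) <> 1.  If
   this happens for every k, then rho composed with the product of the f_k is
   a homomorphism F^N -> G killing none of the i_k s_k, so S is not a set of
   weak identities. *)
From Stdlib Require Import Classical ClassicalEpsilon.
From mathcomp Require Import all_boot.
From mathcomp Require Import monoid.

Set Implicit Arguments.
Unset Strict Implicit.
Unset Printing Implicit Defensive.

Definition letter_inv (a : letter) : letter := (a.1, ~~ a.2).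

Lemma push_invK a w : reduced w -> push a (push (letter_inv a) w) = w.
Proof.
case: w => [|y w] /=; first by rewrite /cancels /= eqxx; case: a.2.
move=> red_yw; case: ifP => [cancel_ay|_]; last first.
  by rewrite /= /cancels /= eqxx; case: a.2.
move: red_yw; have -> : y = a.
  move: cancel_ay; rewrite /cancels /=; case: a y => [i b] [j c] /=.
  by case/andP=> /eqP ->; case: b; case: c.
by case: w => [|z w] //= /andP [/negbTE ->].
Qed.

Lemma foldr_push_catV u w : reduced w ->
  foldr push w (u ++ rev (map letter_inv u)) = w.
Proof.
elim: u w => [|a u IHu] w red_w //=.
by rewrite rev_cons -cats1 catA foldr_cat /= IHu ?push_invK ?push_reduced.
Qed.

Lemma reduce_id w : reduced w -> reduce w = w.
Proof.
elim: w => [|a w IHw] //= red_aw.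
rewrite IHw; last exact: path_sorted red_aw.
by case: w red_aw {IHw} => [|b w] //= /andP [/negbTE ->].
Qed.

Lemma FmulgV x : Fmul x (Finv x) = F1.
Proof.
apply: val_inj => /=; rewrite /reduce foldr_cat.
rewrite [foldr push [::] _]reduce_id ?reduce_reduced // -foldr_cat.
exact: (foldr_push_catV (sval x) (w := [::])).
Qed.

Lemma Fmulg1 x : Fmul x F1 = x.
Proof. by apply: val_inj => /=; rewrite cats0 reduce_id //; case: x. Qed.

Lemma Fmul1g x : Fmul F1 x = x.
Proof. by apply: val_inj => /=; rewrite reduce_id //; case: x. Qed.

Lemma inclM N (k : 'I_N) a b :
  incl k (Fmul a b) = Fprod_mul (incl k a) (incl k b).
Proof. by apply/ffunP => j; rewrite !ffunE; case: (j == k); rewrite ?Fmul1g. Qed.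

Definition Fprod_map N (f : 'I_N -> F -> F) (y : Fprod N) : Fprod N :=
  [ffun j => f j (y j)].

Section ProductHomomorphism.

Variables (G : groupType) (N : nat) (rho : Fprod N -> G).
Hypothesis rho_hom : prod_hom rho.

Lemma prod_hom_idem w : Fprod_mul w w = w -> rho w = 1%g.
Proof. by move=> ww; apply: (@mulgI _ (rho w)); rewrite -rho_hom ww mulg1. Qed.

Lemma prod_hom_incl_endo1 (k : 'I_N) f : F_endo f -> rho (incl k (f F1)) = 1%g.
Proof. by move=> endo_f; apply: prod_hom_idem; rewrite -inclM -endo_f Fmul1g. Qed.

Definition endo_kernel (k : 'I_N) (y : F) : Prop :=
  forall f, F_endo f -> rho (incl k (f y)) = 1%g.

Lemma endo_kernel_Tsubgroup k : is_Tsubgroup (endo_kernel k).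
Proof.
split.
- by move=> f endo_f; apply: prod_hom_incl_endo1.
- move=> y z ker_y ker_z f endo_f.
  by rewrite endo_f inclM rho_hom ker_y // ker_z // mulg1.
- move=> y ker_y f endo_f.
  have := congr1 (fun z => rho (incl k (f z))) (FmulgV y).
  by rewrite /= endo_f inclM rho_hom ker_y // prod_hom_incl_endo1 // mul1g.
- move=> g endo_g y ker_y f endo_f; apply: (ker_y (f \o g)).
  by move=> a b /=; rewrite endo_g endo_f.
Qed.

Variable f : 'I_N -> F -> F.
Hypothesis endo_f : forall j, F_endo (f j).

Lemma prod_hom_map : prod_hom (rho \o Fprod_map f).
Proof.
move=> y z /=; rewrite -rho_hom; congr rho; apply/ffunP => j.
by rewrite !ffunE endo_f.
Qed.

Lemma prod_hom_map_incl k s :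
  rho (Fprod_map f (incl k s)) = rho (incl k (f k s)).
Proof.
pose w : Fprod N := [ffun j => if j == k then F1 else f j F1].
have rho_w : rho w = 1%g.
  apply: prod_hom_idem; apply/ffunP => j; rewrite !ffunE.
  by case: (j == k); rewrite -?endo_f Fmul1g.
rewrite -[RHS]mulg1 -rho_w -rho_hom; congr rho; apply/ffunP => j.
by rewrite !ffunE; case: eqP => [->|_]; rewrite ?Fmulg1 ?Fmul1g.
Qed.

End ProductHomomorphism.

Theorem theorem2p5 (G : groupType) (S : F -> Prop) :
  weak_identities G S -> weak_identities G (Tgen S).
Proof.
case=> N [N_gt0 weakS]; exists N; split => // x Tx rho rho_hom.
apply: NNPP => no_trivial_k.
have witness k : exists sf : F * (F -> F),
    [/\ S sf.1, F_endo sf.2 & rho (incl k (sf.2 sf.1)) <> 1%g].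
  apply: NNPP => no_witness; apply: no_trivial_k; exists k.
  apply: (Tx k _ (endo_kernel_Tsubgroup rho_hom k) _ id) => // s Ss f endo_f.
  by apply: NNPP => nontriv; apply: no_witness; exists (s, f).
have [sf sfP] := ClassicalEpsilon.choice _ witness.
have endo_sf j : F_endo (sf j).2 by case: (sfP j).
have [k] := weakS (fun j => (sf j).1) (fun j => let: And3 Ss _ _ := sfP j in Ss)
  _ (prod_hom_map rho_hom endo_sf).
by rewrite /= prod_hom_map_incl //; case: (sfP k).
Qed.
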